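(* Let $A$ be an AUF algebra. Then $\mathrm{Coh}_{\mathrm L}(A)$ has a projective generator if and only if $A$ is strongly AUF.
   Context: All algebras are associative $\mathbb C$-algebras, not necessarily unital. An idempotent is $e$ with $e^2=e$. An algebra $A$ is AUF if there is a family $(e_i)_{i\in\mathfrak I}$ of mutually orthogonal idempotents with $\dim e_iAe_j<\infty$ and $A=\sum_{i,j}e_iAe_j$. A left $A$-module $M$ is quasicoherent if $\xi\in A\xi$ for all $\xi\in M$, coherent if moreover finitely generated; $\mathrm{Coh}_{\mathrm L}(A)$ is the category of coherent left $A$-modules. Irreducible means nonzero with no nonzero proper submodules. An idempotent $e$ is generating if every irreducible quasicoherent left $A$-module is a quotient of $Ae$; $A$ is strongly AUF if it has a generating idempotent. A projective generator of $\mathrm{Coh}_{\mathrm L}(A)$ is an object that is projective as a left $A$-module and such that every object of $\mathrm{Coh}_{\mathrm L}(A)$ is a quotient of $M^{\oplus n}$ for some $n\ge1$. *)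

From HB Require Import structures.
From mathcomp Require Import all_boot all_algebra.
From mathcomp Require Import complex.
From mathcomp Require Import reals Rstruct.
Set Implicit Arguments. Unset Strict Implicit. Unset Printing Implicit Defensive.
Import GRing.Theory.
Local Open Scope ring_scope.

Definition CC : fieldType := complex Rdefinitions.R.

Record nualg := NuAlg {
  acar :> lmodType CC;
  amul : acar -> acar -> acar;
  amulDl : forall (c : CC) (x y z : acar), amul (c *: x + y) z = c *: amul x z + amul y z;
  amulDr : forall (c : CC) (x y z : acar), amul z (c *: x + y) = c *: amul z x + amul z y;
  amulA : forall x y z : acar, amul x (amul y z) = amul (amul x y) z }.

Record lmodule (A : nualg) := LModule {
  mcar :> lmodType CC;
  act : A -> mcar -> mcar;
  actDl : forall (c : CC) (a b : A) (m : mcar), act (c *: a + b) m = c *: act a m + act b m;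
  actDr : forall (c : CC) (a : A) (m n : mcar), act a (c *: m + n) = c *: act a m + act a n;
  actA : forall (a b : A) (m : mcar), act (amul a b) m = act a (act b m) }.

Section Defs.
Variable A : nualg.
Local Notation "x * y" := (amul x y) : ring_scope.

Definition idempotent (e : A) : Prop := e * e = e.

Definition fin_dim_subspace (V : A -> Prop) : Prop :=
  exists s : seq A, forall x, V x ->
    exists c : 'I_(size s) -> CC, x = \sum_(k < size s) c k *: s`_k.

Definition AUF : Prop :=
  exists (I : Type) (e : I -> A),
    (forall i, idempotent (e i)) /\
    (forall i j, i <> j -> e i * e j = 0) /\
    (forall i j, fin_dim_subspace (fun x => exists a, x = e i * a * e j)) /\
    (forall x : A, exists s : seq ((I * I) * A),
        x = \sum_(t <- s) (e t.1.1 * t.2 * e t.1.2)).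

Definition is_hom (M N : lmodule A) (f : M -> N) : Prop :=
  (forall (c : CC) (x y : M), f (c *: x + y) = c *: f x + f y) /\
  (forall (a : A) (x : M), f (act a x) = act a (f x)).

Definition submodule (M : lmodule A) (P : M -> Prop) : Prop :=
  P 0 /\ (forall (c : CC) x y, P x -> P y -> P (c *: x + y)) /\
  (forall a x, P x -> P (act a x)).

Definition quasicoherent (M : lmodule A) : Prop :=
  forall xi : M, exists a : A, xi = act a xi.

Definition fin_generated (M : lmodule A) : Prop :=
  exists gens : seq M, forall P : M -> Prop, submodule P ->
    (forall g, g \in gens -> P g) -> forall x, P x.

Definition coherent (M : lmodule A) : Prop :=
  quasicoherent M /\ fin_generated M.

Definition irreducible (M : lmodule A) : Prop :=
  (exists x : M, x <> 0) /\
  forall P : M -> Prop, submodule P ->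
    (forall x, P x -> x = 0) \/ (forall x, P x).

Definition Ae (e : A) := {x : A | exists a : A, x = a * e}.

Definition is_hom_from_Ae (e : A) (M : lmodule A) (f : Ae e -> M) : Prop :=
  (forall (c : CC) (x y z : Ae e), proj1_sig z = c *: proj1_sig x + proj1_sig y ->
      f z = c *: f x + f y) /\
  (forall (a : A) (x z : Ae e), proj1_sig z = a * proj1_sig x -> f z = act a (f x)).

Definition quotient_of_Ae (e : A) (M : lmodule A) : Prop :=
  exists f : Ae e -> M, is_hom_from_Ae f /\ forall m : M, exists x, f x = m.

Definition generating_idempotent (e : A) : Prop :=
  idempotent e /\
  forall M : lmodule A, irreducible M -> quasicoherent M -> quotient_of_Ae e M.

Definition strongly_AUF : Prop := AUF /\ exists e : A, generating_idempotent e.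

Definition projective (P : lmodule A) : Prop :=
  forall (N N' : lmodule A) (p : N -> N') (f : P -> N'),
    is_hom p -> (forall y, exists x, p x = y) -> is_hom f ->
    exists g : P -> N, is_hom g /\ forall x, p (g x) = f x.

(* N is a quotient of M^{(+) n}: there is a surjective homomorphism
   M^{(+) n} -> N, written out via the universal property of the direct sum
   as an n-tuple of homomorphisms (f_k) with (m_k) |-> sum_k f_k m_k onto. *)
Definition quotient_of_power (M N : lmodule A) (n : nat) : Prop :=
  exists f : 'I_n -> M -> N, (forall k, is_hom (f k)) /\
    forall y : N, exists x : 'I_n -> M, y = \sum_(k < n) f k (x k).

Definition projective_generator_Coh (M : lmodule A) : Prop :=
  coherent M /\ projective M /\
  forall N : lmodule A, coherent N -> exists n, (1 <= n)%N /\ quotient_of_power M N n.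

End Defs.

From Pilot Require Import Defs.
From HB Require Import structures.
From mathcomp Require Import all_boot all_algebra.
From mathcomp Require Import boolp classical_sets.

(* If e is a generating idempotent, the cyclic module A e is a projective
   generator of Coh_L(A): a homomorphism out of A e is determined by the image
   of e, which gives projectivity, and every coherent N satisfies A e N = N,
   for otherwise a maximal submodule containing A e N (Zorn's lemma, N being
   finitely generated) would give an irreducible quasicoherent quotient of N
   killed by e, which cannot be a quotient of A e.  Conversely, let M be a
   coherent generator.  As A is AUF, a
   finite sum E of the orthogonal idempotents e_i fixes the finitely many
   generators of M.  An irreducible quasicoherent S is a quotient of some M^n,
   so it contains a nonzero image s of a generator; then E s = s and z |-> z s
   maps A E onto S. *)

Set Implicit Arguments. Unset Strict Implicit. Unset Printing Implicit Defensive.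
Import GRing.Theory.
Local Open Scope classical_set_scope.
Local Open Scope ring_scope.

Section LinearMaps.
Variables (U V : lmodType CC) (f : U -> V).
Hypothesis f_linear : linear f.
Let F : {linear U -> V} := HB.pack f (GRing.isLinear.Build CC U V *:%R f f_linear).
Lemma lin0 : f 0 = 0. Proof. exact: linear0 F. Qed.
Lemma linB x y : f (x - y) = f x - f y. Proof. exact: (raddfB F x y). Qed.
Lemma linZ c x : f (c *: x) = c *: f x. Proof. exact: (linearZ_LR F c x). Qed.
Lemma lin_sum (I : Type) (r : seq I) (G : I -> U) :
  f (\sum_(i <- r) G i) = \sum_(i <- r) f (G i).
Proof. exact: (raddf_sum F). Qed.
End LinearMaps.

Section ModuleBasics.
Variable A : nualg.

Lemma act_linear (M : lmodule A) (a : A) : linear (@act A M a).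
Proof. by move=> c m n; apply: actDr. Qed.

Lemma act_linear_left (M : lmodule A) (m : M) : linear (@act A M ^~ m).
Proof. by move=> c a b; apply: actDl. Qed.

Section Submodule.
Variables (M : lmodule A) (P : M -> Prop).
Hypothesis P_sub : submodule P.

Lemma submodule0 : P 0. Proof. by case: P_sub. Qed.

Lemma submoduleZD c x y : P x -> P y -> P (c *: x + y).
Proof. by case: P_sub => _ [PZD _]; apply: PZD. Qed.

Lemma submoduleD x y : P x -> P y -> P (x + y).
Proof. by move=> Px Py; have := submoduleZD 1 Px Py; rewrite scale1r. Qed.

Lemma submoduleZ c x : P x -> P (c *: x).
Proof. by move=> Px; rewrite -[_ *: _]addr0; apply: submoduleZD => //; apply: submodule0. Qed.

Lemma submoduleN x : P x -> P (- x).
Proof. by rewrite -scaleN1r; apply: submoduleZ. Qed.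

Lemma submoduleB x y : P x -> P y -> P (x - y).
Proof. by move=> Px Py; rewrite -scaleN1r addrC; apply: submoduleZD. Qed.

Lemma submodule_act a x : P x -> P (act a x).
Proof. by case: P_sub => _ [_ Pact]; apply: Pact. Qed.

Lemma submodule_sum (I : eqType) (r : seq I) (F : I -> M) :
  (forall i, i \in r -> P (F i)) -> P (\sum_(i <- r) F i).
Proof.
move=> PF; rewrite big_seq; apply: big_ind => //; first exact: submodule0.
exact: submoduleD.
Qed.

End Submodule.

Section Quotient.
Variables (N : lmodule A) (K : N -> Prop).
Hypothesis K_sub : submodule K.

(* The quotient N / K, a coset being represented by its membership predicate.
   The unused argument makes the quotient structure, which depends on the
   proof [K_sub], inferable from the type. *)
Definition coset_space of submodule K :=
  {X : N -> Prop | exists x : N, X = fun y => K (y - x)}.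
Local Notation cosets := (coset_space K_sub).
HB.instance Definition _ := gen_eqMixin cosets.
HB.instance Definition _ := gen_choiceMixin cosets.

Definition coset (x : N) : cosets := exist _ (fun y => K (y - x)) (ex_intro _ x erefl).
Definition coset_repr (q : cosets) : N := proj1_sig (cid (proj2_sig q)).

Lemma coset_reprK q : coset (coset_repr q) = q.
Proof.
rewrite /coset_repr; case: cid => x /= Ex; case: q Ex => X X_coset /= Ex.
exact: eq_exist.
Qed.

Lemma coset_eq x y : coset x = coset y <-> K (x - y).
Proof.
split=> [exy|Kxy].
  have : sval (coset x) x by rewrite /= subrr; exact: submodule0 K_sub.
  by rewrite exy.
apply: eq_exist; apply: funext => z; apply: propext.
split=> Kz.
  by have := submoduleD K_sub Kz Kxy; rewrite addrA subrK.
by have := submoduleB K_sub Kz Kxy; rewrite opprB addrA subrK.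
Qed.

Lemma coset_ind (Q : cosets -> Prop) : (forall x, Q (coset x)) -> forall q, Q q.
Proof. by move=> Qcoset q; rewrite -(coset_reprK q). Qed.

Lemma coset_reprP x : K (coset_repr (coset x) - x).
Proof. by apply/coset_eq; rewrite coset_reprK. Qed.

Let qadd (p q : cosets) := coset (coset_repr p + coset_repr q).
Let qopp (p : cosets) := coset (- coset_repr p).
Let qscale (c : CC) (p : cosets) := coset (c *: coset_repr p).
Let qact (a : A) (p : cosets) := coset (act a (coset_repr p)).

Lemma qaddE x y : qadd (coset x) (coset y) = coset (x + y).
Proof.
by apply/coset_eq; rewrite opprD addrACA; apply: (submoduleD K_sub); apply: coset_reprP.
Qed.

Lemma qoppE x : qopp (coset x) = coset (- x).
Proof.
by apply/coset_eq; rewrite -opprD; apply: (submoduleN K_sub); apply: coset_reprP.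
Qed.

Lemma qscaleE c x : qscale c (coset x) = coset (c *: x).
Proof.
by apply/coset_eq; rewrite -scalerBr; apply: (submoduleZ K_sub); apply: coset_reprP.
Qed.

Lemma qactE a x : qact a (coset x) = coset (act a x).
Proof.
apply/coset_eq; rewrite -(linB (act_linear a)).
by apply: (submodule_act K_sub); apply: coset_reprP.
Qed.

Lemma qaddA : associative qadd.
Proof. by do 3!elim/coset_ind=> ?; rewrite !qaddE addrA. Qed.
Lemma qaddC : commutative qadd.
Proof. by do 2!elim/coset_ind=> ?; rewrite !qaddE addrC. Qed.
Lemma qadd0 : left_id (coset 0) qadd.
Proof. by elim/coset_ind=> x; rewrite qaddE add0r. Qed.
Lemma qaddN : left_inverse (coset 0) qopp qadd.
Proof. by elim/coset_ind=> x; rewrite qoppE qaddE addNr. Qed.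

HB.instance Definition _ := GRing.isZmodule.Build cosets qaddA qaddC qadd0 qaddN.

Lemma cosetD x y : coset x + coset y = coset (x + y).
Proof. exact: qaddE. Qed.

Lemma qscaleA a b q : qscale a (qscale b q) = qscale (a * b) q.
Proof. by elim/coset_ind: q => x; rewrite !qscaleE scalerA. Qed.
Lemma qscale1 : left_id 1 qscale.
Proof. by elim/coset_ind=> x; rewrite qscaleE scale1r. Qed.
Lemma qscaleDr : right_distributive qscale +%R.
Proof. by move=> c; do 2!elim/coset_ind=> ?; rewrite cosetD !qscaleE cosetD scalerDr. Qed.
Lemma qscaleDl q : {morph qscale^~ q : a b / a + b}.
Proof. by elim/coset_ind: q => x a b; rewrite /= !qscaleE cosetD scalerDl. Qed.

HB.instance Definition _ :=
  GRing.Zmodule_isLmodule.Build CC cosets qscaleA qscale1 qscaleDr qscaleDl.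

Lemma coset_linear : linear coset.
Proof. by move=> c x y; rewrite -qaddE -qscaleE. Qed.

Lemma qactDl c a b q : qact (c *: a + b) q = c *: qact a q + qact b q.
Proof. by elim/coset_ind: q => x; rewrite !qactE actDl coset_linear. Qed.
Lemma qactDr c a p q : qact a (c *: p + q) = c *: qact a p + qact a q.
Proof.
elim/coset_ind: p => x; elim/coset_ind: q => y.
by rewrite -coset_linear !qactE actDr coset_linear.
Qed.
Lemma qactA a b q : qact (amul a b) q = qact a (qact b q).
Proof. by elim/coset_ind: q => x; rewrite !qactE actA. Qed.

Definition quotmod : lmodule A := LModule qactDl qactDr qactA.

Lemma coset_hom : is_hom (coset : N -> quotmod).
Proof. by split=> [|a x]; [exact: coset_linear | symmetry; exact: qactE]. Qed.

Lemma coset_eq0 x : (coset x = 0 :> quotmod) <-> K x.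
Proof. by have := coset_eq x 0; rewrite subr0. Qed.

Lemma quotmod_quasicoherent : quasicoherent N -> quasicoherent quotmod.
Proof.
move=> N_qc; elim/coset_ind=> x; have [a xE] := N_qc x.
by exists a; rewrite -(coset_hom.2 a x) -xE.
Qed.

End Quotient.

Lemma zero_submodule (M : lmodule A) : submodule (fun x : M => x = 0).
Proof.
split=> [//|]; split=> [c x y -> ->|a x ->]; first by rewrite scaler0 addr0.
exact: lin0 (act_linear a).
Qed.

Lemma preimage_submodule (M N : lmodule A) (f : M -> N) (Q : N -> Prop) :
  is_hom f -> submodule Q -> submodule (fun x => Q (f x)).
Proof.
move=> [f_lin f_act] Q_sub; split; first by rewrite (lin0 f_lin); apply: submodule0.
split=> [c x y Qx Qy|a x Qx]; first by rewrite f_lin; apply: submoduleZD.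
by rewrite f_act; apply: submodule_act.
Qed.

Definition generated_by (M : lmodule A) (gens : seq M) : Prop :=
  forall P, submodule P -> (forall g, g \in gens -> P g) -> forall x, P x.

Lemma hom_eq0_on_gens (M N : lmodule A) (gens : seq M) (f : M -> N) :
  generated_by gens -> is_hom f -> (forall g, g \in gens -> f g = 0) ->
  forall x, f x = 0.
Proof.
by move=> gens_span f_hom; apply: gens_span (preimage_submodule f_hom (zero_submodule N)).
Qed.

Section SumImage.
Variables (M N : lmodule A) (n : nat) (f : 'I_n -> M -> N).
Hypothesis f_hom : forall k, is_hom (f k).

Lemma sum_image_submodule :
  submodule (fun y => exists x : 'I_n -> M, y = \sum_(k < n) f k (x k)).
Proof.
split; first by exists (fun=> 0); rewrite big1 // => k _; apply: lin0 (f_hom k).1.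
split=> [c _ _ [x1 ->] [x2 ->]|a _ [x ->]].
  exists (fun k => c *: x1 k + x2 k); rewrite scaler_sumr -big_split.
  by apply: eq_bigr => k _; rewrite (f_hom k).1.
exists (fun k => act a (x k)); rewrite (lin_sum (act_linear a)).
by apply: eq_bigr => k _; rewrite (f_hom k).2.
Qed.

Lemma sum_image_component k m : exists x : 'I_n -> M, f k m = \sum_(k' < n) f k' (x k').
Proof.
exists (fun k' => if k' == k then m else 0); rewrite (bigD1 k) //= eqxx big1 ?addr0 //.
by move=> k' /negbTE ->; apply: lin0 (f_hom k').1.
Qed.

End SumImage.

End ModuleBasics.

Lemma total_bigcup_seq (T : eqType) (F : set (set T)) (X0 : set T) (s : seq T) :
  F X0 -> total_on F subset -> (forall x, x \in s -> (\bigcup_(X in F) X) x) ->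
  exists2 X, F X & X0 `<=` X /\ (forall x, x \in s -> X x).
Proof.
move=> FX0 F_total; elim: s => [|x s IH] s_cup.
  by exists X0 => //; split=> // x; rewrite in_nil.
have [|X FX [X0X sX]] := IH; first by move=> y y_s; apply: s_cup; rewrite inE y_s orbT.
have [Y FY Yx] := s_cup x (mem_head x s).
have [XY|YX] := F_total X Y FX FY.
  exists Y => //; split=> [y /X0X /XY //|y].
  by rewrite inE => /orP [/eqP -> //|/sX]; apply: XY.
by exists X => //; split=> // y; rewrite inE => /orP [/eqP ->|/sX //]; apply: YX.
Qed.

Section MaximalSubmodule.
Variables (A : nualg) (N : lmodule A) (gens : seq N) (K : N -> Prop).
Hypothesis K_sub : submodule K.
Hypothesis K_proper : ~ (forall g, g \in gens -> K g).

Let proper_over (X : set N) :=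
  [/\ submodule X, K `<=` X & ~ (forall g, g \in gens -> X g)].
(* set0 is admitted so that the union of the empty chain is a candidate. *)
Let candidate (X : set N) := X = set0 \/ proper_over X.

Lemma bigcup_candidate (F : set (set N)) :
  F `<=` candidate -> total_on F subset -> candidate (\bigcup_(X in F) X).
Proof.
move=> F_cand F_total.
have [[X0 FX0 [x0 X0x0]]|F_empty] := pselect (exists2 X, F X & exists x, X x);
  last first.
  by left; apply/seteqP; split=> // x [X FX Xx]; apply: F_empty; exists X => //; exists x.
have cand_proper X x : F X -> X x -> proper_over X.
  by move=> FX Xx; case: (F_cand X FX) => // X_eq0; rewrite X_eq0 in Xx.
have [X0_sub X0_K _] := cand_proper X0 x0 FX0 X0x0.
right; split.
- split; first by exists X0 => //; apply: submodule0.
  split=> [c x y [X FX Xx] [Y FY Yy]|a x [X FX Xx]].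
    have [XY|YX] := F_total X Y FX FY.
      have [Y_sub _ _] := cand_proper Y y FY Yy.
      by exists Y => //; apply: submoduleZD => //; apply: XY.
    have [X_sub _ _] := cand_proper X x FX Xx.
    by exists X => //; apply: submoduleZD => //; apply: YX.
  have [X_sub _ _] := cand_proper X x FX Xx.
  by exists X => //; apply: submodule_act.
- by move=> x Kx; exists X0 => //; apply: X0_K.
- move=> gens_cup; have [X FX [X0X gensX]] := total_bigcup_seq FX0 F_total gens_cup.
  by have [_ _ X_proper] := cand_proper X x0 FX (X0X _ X0x0); apply: X_proper.
Qed.

Lemma exists_maximal_submodule : exists M : set N,
  [/\ submodule M, K `<=` M, ~ (forall g, g \in gens -> M g) &
   forall Q, submodule Q -> M `<=` Q -> ~ (forall g, g \in gens -> Q g) -> Q `<=` M].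
Proof.
have [M [M_cand M_max]] := Zorn_bigcup bigcup_candidate.
have [M_sub KM M_proper] : proper_over M.
  case: M_cand => // M0; exfalso; apply: (M_max K); last by right; split.
  by rewrite M0; split=> // /(_ 0 (submodule0 K_sub)).
exists M; split=> // Q Q_sub MQ Q_proper x Qx; apply: contrapT => Mx.
apply: (M_max Q); last by right; split=> //; apply: subset_trans MQ.
by split=> // QM; apply: Mx; apply: QM.
Qed.

End MaximalSubmodule.

Lemma quotmod_maximal_irreducible (A : nualg) (N : lmodule A) (gens : seq N)
    (M : N -> Prop) (M_sub : submodule M) :
  generated_by gens -> ~ (forall g, g \in gens -> M g) ->
  (forall Q, submodule Q -> M `<=` Q -> ~ (forall g, g \in gens -> Q g) -> Q `<=` M) ->
  irreducible (quotmod M_sub).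
Proof.
move=> gens_span M_proper M_max; split.
  have [g g_gens Mg] : exists2 g, g \in gens & ~ M g.
    apply: contrapT => all_M; apply: M_proper => g g_gens.
    by apply: contrapT => Mg; apply: all_M; exists g.
  by exists (coset M_sub g) => /coset_eq0.
move=> Q Q_sub; have Q'_sub := preimage_submodule (coset_hom M_sub) Q_sub.
have [gens_Q'|Q'_proper] := pselect (forall g, g \in gens -> Q (coset M_sub g)).
  by right; elim/coset_ind => x; apply: gens_span gens_Q' x.
left; elim/coset_ind => x Qx; apply/coset_eq0; apply: (M_max _ Q'_sub) Qx => //.
by move=> y /coset_eq0 ->; apply: submodule0.
Qed.

Local Notation "x * y" := (amul x y) : ring_scope.

Section Algebra.
Variable A : nualg.

Lemma amul_linear_left (z : A) : linear (fun x : A => x * z).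
Proof. by move=> c x y; apply: amulDl. Qed.

Lemma amul_linear (z : A) : linear (fun x : A => z * x).
Proof. by move=> c x y; apply: amulDr. Qed.

Definition regular_module : lmodule A :=
  @LModule A A (@amul A) (@amulDl A) (fun c a x y => amulDr c x y a)
    (fun a b x => esym (amulA a b x)).

Lemma orthogonal_idempotents_unit (I : Type) (e : I -> A) (us : seq A) :
  (forall i, Defs.idempotent (e i)) -> (forall i j, i <> j -> e i * e j = 0) ->
  (forall u, u \in us -> exists i, u = e i) ->
  exists2 E, Defs.idempotent E & {in us, forall u, E * u = u}.
Proof.
move=> e_idem e_orth us_e.
have mulE u : u \in us -> (\sum_(v <- undup us) v) * u = u.
  move=> u_us; have [i ui] := us_e u u_us.
  rewrite (lin_sum (amul_linear_left u)) (bigD1_seq u) ?mem_undup ?undup_uniq //=.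
  rewrite big1_seq => [|v /andP [vu]]; first by rewrite addr0 ui e_idem.
  rewrite mem_undup => /us_e [j vj]; rewrite vj ui e_orth // => ji.
  by move: vu; rewrite vj ui ji eqxx.
exists (\sum_(v <- undup us) v) => //.
rewrite /Defs.idempotent (lin_sum (amul_linear _)); apply: eq_big_seq => u.
by rewrite mem_undup; apply: mulE.
Qed.

Lemma AUF_left_unit (xs : seq A) : AUF A ->
  exists2 E, Defs.idempotent E & {in xs, forall x, E * x = x}.
Proof.
case=> I [e [e_idem [e_orth [_ e_span]]]].
have [us us_e us_unit] : exists2 us : seq A, all (fun u => `[< exists i, u = e i >]) us &
    forall E, {in us, forall u, E * u = u} -> {in xs, forall x, E * x = x}.
  elim: xs => [|x xs [us us_e us_unit]]; first by exists [::].
  have [s xE] := e_span x.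
  pose s' := [seq (e t.1.1, t.2 * e t.1.2) | t <- s].
  have {}xE : x = \sum_(t <- s') t.1 * t.2.
    by rewrite big_map xE; apply: eq_bigr => t _; rewrite amulA.
  exists (map fst s' ++ us) => [|E Eu y].
    rewrite all_cat us_e andbT -map_comp; apply: all_mapT => t.
    by apply/asboolP; exists t.1.1.
  rewrite inE => /orP [/eqP ->|]; last first.
    by apply: us_unit => u u_us; apply: Eu; rewrite mem_cat u_us orbT.
  rewrite xE (lin_sum (amul_linear E)); apply: eq_big_seq => t t_s'.
  by rewrite amulA Eu // mem_cat map_f.
have [|E E_idem E_unit] := orthogonal_idempotents_unit e_idem e_orth (us := us).
  by move=> u /(allP us_e) /asboolP.
by exists E => //; apply: us_unit.
Qed.

End Algebra.

Section QuotientsOfAe.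
Variable A : nualg.

Lemma irreducible_coherent (S : lmodule A) :
  irreducible S -> quasicoherent S -> coherent S.
Proof.
move=> [[s s_nz] S_irr] S_qc; split=> //; exists [:: s] => P P_sub Ps.
case: (S_irr P P_sub) => // P0; case: s_nz; apply: P0; apply: Ps; exact: mem_head.
Qed.

Lemma quasicoherent_gens_unit (M : lmodule A) (gens : seq M) :
  AUF A -> quasicoherent M -> exists2 E, Defs.idempotent E & {in gens, forall g, act E g = g}.
Proof.
move=> AUF_A /choice [a ga].
have [E E_idem E_unit] := AUF_left_unit [seq a g | g <- gens] AUF_A.
exists E => // g g_gens; have -> : act E g = act (E * a g) g by rewrite actA -ga.
by rewrite E_unit ?map_f // -ga.
Qed.

Lemma irreducible_quotient_of_Ae (S : lmodule A) (E : A) (s : S) :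
  Defs.idempotent E -> irreducible S -> s <> 0 -> act E s = s -> quotient_of_Ae E S.
Proof.
move=> E_idem [_ S_irr] s_nz Es.
exists (fun z : Ae E => act (sval z) s); split.
  by split=> [c x y z -> | a x z ->]; rewrite ?actDl ?actA.
have As_sub : submodule (fun m : S => exists b, m = act b s).
  split; first by exists 0; rewrite (lin0 (act_linear_left s)).
  split=> [c _ _ [b1 ->] [b2 ->]|a _ [b ->]]; first by exists (c *: b1 + b2); rewrite actDl.
  by exists (a * b); rewrite actA.
case: (S_irr _ As_sub) => [As0|As_full m]; first by case: s_nz; apply: As0; exists E.
have [b ->] := As_full m.
by exists (exist _ (b * E) (ex_intro _ b erefl)); rewrite /= actA Es.
Qed.

Lemma quotient_of_Ae_eq0 (S : lmodule A) (E : A) :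
  Defs.idempotent E -> quotient_of_Ae E S -> (forall s : S, act E s = 0) ->
  forall s : S, s = 0.
Proof.
move=> E_idem [f [[_ f_act] f_onto]] E_kills s.
pose Ee : Ae E := exist _ E (ex_intro _ E (esym E_idem)).
have fE0 : f Ee = 0 by rewrite (f_act E Ee Ee) ?E_kills //= E_idem.
have [[z [a za]] <-] := f_onto s.
by rewrite (f_act a Ee) ?fE0 ?(lin0 (act_linear a)).
Qed.

Lemma generating_idempotent_of_generator (M : lmodule A) : AUF A -> coherent M ->
  (forall N, coherent N -> exists n, (1 <= n)%N /\ quotient_of_power M N n) ->
  exists e : A, generating_idempotent e.
Proof.
move=> AUF_A [M_qc [gens gens_span]] M_gen.
have [E E_idem E_gens] := quasicoherent_gens_unit gens AUF_A M_qc.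
exists E; split=> // S S_irr S_qc.
have [n [_ [f [f_hom f_onto]]]] := M_gen S (irreducible_coherent S_irr S_qc).
have [[k [g [g_gens fkg]]]|all0] := pselect (exists k g, g \in gens /\ f k g <> 0).
  by apply: (irreducible_quotient_of_Ae E_idem S_irr fkg); rewrite -(f_hom k).2 E_gens.
have [y y_nz] := S_irr.1; case: y_nz; have [x ->] := f_onto y.
rewrite big1 // => k _; apply: (hom_eq0_on_gens gens_span (f_hom k)) => g g_gens.
by apply: contrapT => fkg; apply: all0; exists k, g.
Qed.

End QuotientsOfAe.

Section AeModule.
Variables (A : nualg) (e : A).

Lemma left_annihilator_submodule : @submodule A (regular_module A) (fun x => x * e = 0).
Proof.
split; first exact: lin0 (amul_linear_left e).
split=> [c x y /= xe ye|a x /= xe]; first by rewrite amulDl xe ye scaler0 addr0.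
by rewrite -amulA xe (lin0 (amul_linear a)).
Qed.

(* A e, realised as A modulo the left annihilator of e (x e <-> class of x). *)
Definition Ae_module : lmodule A := quotmod left_annihilator_submodule.
Definition Ae_proj (x : regular_module A) : Ae_module := coset left_annihilator_submodule x.

Lemma Ae_proj_hom : is_hom Ae_proj.
Proof. exact: coset_hom. Qed.

Lemma Ae_proj_act a x : act a (Ae_proj x) = Ae_proj (a * x).
Proof. by rewrite -Ae_proj_hom.2. Qed.

Lemma Ae_proj_eq x y : Ae_proj x = Ae_proj y <-> x * e = y * e.
Proof.
rewrite /Ae_proj; split=> [/coset_eq|xy].
  by rewrite /= (linB (amul_linear_left e)) => /eqP; rewrite subr_eq0 => /eqP.
by apply/coset_eq; rewrite /= (linB (amul_linear_left e)) xy subrr.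
Qed.

Lemma Ae_proj_ind (P : Ae_module -> Prop) : (forall x, P (Ae_proj x)) -> forall m, P m.
Proof. exact: coset_ind. Qed.

Hypothesis e_idem : Defs.idempotent e.

Lemma Ae_proj_mule x : Ae_proj (x * e) = Ae_proj x.
Proof. by apply/Ae_proj_eq; rewrite -amulA e_idem. Qed.

Definition Ae_hom (N : lmodule A) (n : N) (m : Ae_module) : N := act (coset_repr m * e) n.

Lemma Ae_homE (N : lmodule A) (n : N) x : Ae_hom n (Ae_proj x) = act (x * e) n.
Proof. by rewrite /Ae_hom; congr act; apply/Ae_proj_eq; rewrite /Ae_proj coset_reprK. Qed.

Lemma Ae_hom_is_hom (N : lmodule A) (n : N) : is_hom (Ae_hom n).
Proof.
split=> [c|a]; elim/Ae_proj_ind => x; first elim/Ae_proj_ind => y.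
  by rewrite -Ae_proj_hom.1 !Ae_homE amulDl actDl.
by rewrite Ae_proj_act !Ae_homE -amulA actA.
Qed.

Lemma Ae_module_coherent : AUF A -> coherent Ae_module.
Proof.
move=> AUF_A; split.
  elim/Ae_proj_ind => x; have [E _ E_unit] := AUF_left_unit [:: x * e] AUF_A.
  by exists E; rewrite Ae_proj_act; apply/Ae_proj_eq; rewrite -amulA E_unit ?mem_head.
exists [:: Ae_proj e] => P P_sub Pe; elim/Ae_proj_ind => x.
by rewrite -Ae_proj_mule -Ae_proj_act; apply: submodule_act => //; apply: Pe; apply: mem_head.
Qed.

Lemma Ae_module_projective : projective Ae_module.
Proof.
move=> N N' p f [_ p_act] p_onto [_ f_act].
have [n pn] := p_onto (f (Ae_proj e)).
exists (Ae_hom n); split=> [|m]; first exact: Ae_hom_is_hom.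
elim/Ae_proj_ind: m => x.
by rewrite Ae_homE p_act pn -f_act Ae_proj_act !Ae_proj_mule.
Qed.

Definition Ae_span (N : lmodule A) (y : N) : Prop :=
  exists s : seq (A * N), y = \sum_(t <- s) act (t.1 * e) t.2.

Lemma Ae_span_submodule (N : lmodule A) : submodule (@Ae_span N).
Proof.
split; first by exists [::]; rewrite big_nil.
split=> [c _ _ [s1 ->] [s2 ->]|a _ [s ->]].
  exists ([seq (c *: t.1, t.2) | t <- s1] ++ s2).
  rewrite big_cat big_map scaler_sumr; congr (_ + _); apply: eq_bigr => t _ /=.
  by rewrite (linZ (amul_linear_left e)) (linZ (act_linear_left t.2)).
exists [seq (a * t.1, t.2) | t <- s]; rewrite big_map (lin_sum (act_linear a)).
by apply: eq_bigr => t _ /=; rewrite -actA amulA.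
Qed.

Hypothesis e_gen :
  forall S : lmodule A, irreducible S -> quasicoherent S -> quotient_of_Ae e S.

Lemma Ae_span_full (N : lmodule A) : coherent N -> forall y : N, Ae_span y.
Proof.
move=> [N_qc [gens gens_span]] y; apply: contrapT => y_notin.
have gens_notin : ~ (forall g, g \in gens -> Ae_span g).
  by move=> gens_in; apply: y_notin; apply: gens_span gens_in y; apply: Ae_span_submodule.
have [M [M_sub span_M M_proper M_max]] :=
  exists_maximal_submodule (Ae_span_submodule N) gens_notin.
have S_irr := quotmod_maximal_irreducible M_sub gens_span M_proper M_max.
have e_kills (q : quotmod M_sub) : act e q = 0.
  elim/coset_ind: q => m; rewrite -(coset_hom M_sub).2; apply/coset_eq0; apply: span_M.
  by exists [:: (e, m)]; rewrite big_seq1 /= e_idem.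
have [[q q_nz] _] := S_irr; apply: q_nz.
apply: (quotient_of_Ae_eq0 e_idem _ e_kills); apply: e_gen S_irr _.
exact: quotmod_quasicoherent.
Qed.

Lemma Ae_module_generates (N : lmodule A) : coherent N ->
  exists n, (1 <= n)%N /\ quotient_of_power Ae_module N n.
Proof.
move=> N_coh; have /choice [s sE] := Ae_span_full N_coh.
case: N_coh => _ [gens gens_span].
(* The extra 0 only ensures n >= 1. *)
pose ms := 0 :: flatten [seq map snd (s g) | g <- gens].
exists (size ms); split=> //.
have f_hom (k : 'I_(size ms)) : is_hom (Ae_hom ms`_k) := Ae_hom_is_hom _.
exists (fun k => Ae_hom ms`_k); split=> [//|y].
move: y; apply: (gens_span _ (sum_image_submodule f_hom)) => g g_gens.
rewrite [g]sE; apply: (submodule_sum (sum_image_submodule f_hom)) => t t_sg.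
have t_ms : t.2 \in ms.
  by rewrite inE; apply/orP; right; apply/flattenP; exists (map snd (s g)); apply: map_f.
have k_lt : (index t.2 ms < size ms)%N by rewrite index_mem.
have := sum_image_component f_hom (Ordinal k_lt) (Ae_proj t.1).
by rewrite /= Ae_homE nth_index.
Qed.

End AeModule.

Theorem proposition7p8 (A : nualg) :
  AUF A ->
  ((exists M : lmodule A, projective_generator_Coh M) <-> strongly_AUF A).
Proof.
move=> AUF_A; split=> [[M [M_coh [_ M_gen]]]|[_ [e [e_idem e_gen]]]].
  by split=> //; apply: generating_idempotent_of_generator M_coh M_gen.
exists (Ae_module e); split; first exact: Ae_module_coherent.
split; first exact: Ae_module_projective.
by move=> N; apply: Ae_module_generates.
Qed.
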